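(* Let $\Omega=[0,1]$, let $p_1,\dots,p_n\in(0,1)$ be distinct, and let $F_\infty$ be the pointwise minimal $\Omega$-tropical series that is non-smooth at each of $p_1,\dots,p_n$. Let $q\in[0,1)$ be the fractional part of $-\sum_{j=1}^n p_j$. Let $H_\infty$ be the set of non-smooth points of $F_\infty$ and $\mu_\infty$ their multiplicities. Then: (i) if $q=0$, then $H_\infty=\{p_1,\dots,p_n\}$ and all multiplicities equal $1$; (ii) if $q=p_j$ for some $j\in\{1,\dots,n\}$, then $H_\infty=\{p_1,\dots,p_n\}$, $\mu_\infty(p_j)=2$, and all other multiplicities equal $1$; (iii) otherwise, $H_\infty=\{q,p_1,\dots,p_n\}$ and all multiplicities equal $1$.
   Context: Let $\Omega=[\alpha,\beta]$ be a compact interval. An $\Omega$-tropical series is a function $F:\Omega\to[0,\infty)$ with $F(\alpha)=F(\beta)=0$ that can be written as $F(z)=\inf_{v\in\mathbb{Z}}(a_v+zv)$ for some real numbers $a_v$. Such $F$ is concave piecewise linear with integer slopes; its non-smooth points are the points of $(\alpha,\beta)$ where $F$ is not differentiable, and the multiplicity of such a point $h$ is $F'(h^-)-F'(h^+)\in\mathbb{Z}_{\ge1}$. For points $p_1,\dots,p_n$ in $(\alpha,\beta)$, the pointwise infimum of all $\Omega$-tropical series that are non-smooth at each $p_i$ is itself an $\Omega$-tropical series non-smooth at each $p_i$; it is denoted $F_\infty=G_{\{p_1,\dots,p_n\}}0_\Omega$. *)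

From Stdlib Require Import Reals ZArith Lra.
From Coquelicot Require Import Coquelicot.
Open Scope R_scope.

(* An Omega-tropical series on [alpha, beta]: nonnegative on Omega, vanishing at
   the endpoints, and equal on Omega to inf_{v in Z} (a_v + z v) for some real a_v
   (the infimum being a real greatest lower bound). *)
Definition is_trop_series (alpha beta : R) (F : R -> R) : Prop :=
  (forall z, alpha <= z <= beta -> 0 <= F z) /\
  F alpha = 0 /\ F beta = 0 /\
  exists a : Z -> R, forall z, alpha <= z <= beta ->
    (forall v : Z, F z <= a v + z * IZR v) /\
    (forall m, (forall v : Z, m <= a v + z * IZR v) -> m <= F z).

Definition non_smooth (alpha beta : R) (F : R -> R) (h : R) : Prop :=
  alpha < h < beta /\ ~ ex_derive F h.

Definition is_left_deriv (F : R -> R) (h l : R) : Prop :=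
  filterlim (fun t => (F (h + t) - F h) / t) (at_left 0) (locally l).
Definition is_right_deriv (F : R -> R) (h l : R) : Prop :=
  filterlim (fun t => (F (h + t) - F h) / t) (at_right 0) (locally l).

Definition has_mult (F : R -> R) (h : R) (m : Z) : Prop :=
  exists dl dr, is_left_deriv F h dl /\ is_right_deriv F h dr /\ dl - dr = IZR m.

Fixpoint psum (p : nat -> R) (n : nat) : R :=
  match n with O => 0 | S k => psum p k + p k end.

From Stdlib Require Import Reals ZArith Lra Lia Classical List.
From Coquelicot Require Import Coquelicot.
Open Scope R_scope.

(* Write [m + q = n - sum_j p_j] with [m] an integer and [q] in [0,1), so that [q] is the
   fractional part of [- sum_j p_j].  The candidate is
     F_inf z = (m+1) z - max(0, z - q) - sum_j max(0, z - p_j):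
   a minimum of finitely many lines with integer slopes, vanishing at 0 and 1, whose slope
   drops by [[q = h] + #{j | p_j = h}] at [h].  Conversely, the supporting slopes of an
   Omega-tropical series G non-smooth at every p_j are integers dropping by at least one
   across each p_j; walking from [z] down to 0, resp. up to 1, this bounds
   [G z + sum_j max(0, z - p_j)] below by [(b + #{p_j < z}) z], resp. by its mirror image,
   and integrality of the slopes makes one of these bounds at least [F_inf z].  So the
   minimal series is F_inf, and its kinks are read off its one-sided slopes. *)

Definition hinge (c x : R) : R := Rmax 0 (x - c).

Fixpoint hinge_sum (p : nat -> R) (n : nat) (x : R) : R :=
  match n with O => 0 | S k => hinge_sum p k x + hinge (p k) x end.

Fixpoint count_lt (p : nat -> R) (n : nat) (x : R) : nat :=
  match n with O => O | S k => (count_lt p k x + if Rlt_dec (p k) x then 1 else 0)%nat end.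
Fixpoint count_eq (p : nat -> R) (n : nat) (x : R) : nat :=
  match n with O => O | S k => (count_eq p k x + if Req_EM_T (p k) x then 1 else 0)%nat end.
Fixpoint count_gt (p : nat -> R) (n : nat) (x : R) : nat :=
  match n with O => O | S k => (count_gt p k x + if Rlt_dec x (p k) then 1 else 0)%nat end.

Definition distinct_pts (p : nat -> R) (n : nat) : Prop :=
  forall i j, (i < n)%nat -> (j < n)%nat -> p i = p j -> i = j.

Lemma hinge_nonneg c x : 0 <= hinge c x.
Proof. apply Rmax_l. Qed.

Lemma hinge_ge_sub c x : x - c <= hinge c x.
Proof. apply Rmax_r. Qed.

Lemma hinge_left c x : x <= c -> hinge c x = 0.
Proof. intro; unfold hinge; rewrite Rmax_left; lra. Qed.

Lemma hinge_right c x : c <= x -> hinge c x = x - c.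
Proof. intro; unfold hinge; rewrite Rmax_right; lra. Qed.

Lemma hinge_sum_nonneg p n x : 0 <= hinge_sum p n x.
Proof. induction n; simpl; [lra|]. pose proof (hinge_nonneg (p n) x); lra. Qed.

Lemma hinge_sum_at0 p n : (forall i, (i < n)%nat -> 0 < p i < 1) -> hinge_sum p n 0 = 0.
Proof.
  induction n; simpl; intros hp; [lra|].
  pose proof (hp n (Nat.lt_succ_diag_r n)).
  rewrite IHn, hinge_left; [lra | lra | intros; apply hp; lia].
Qed.

Lemma hinge_sum_at1 p n : (forall i, (i < n)%nat -> 0 < p i < 1) ->
  hinge_sum p n 1 = INR n - psum p n.
Proof.
  induction n; cbn [hinge_sum psum]; intros hp; [simpl; lra|].
  pose proof (hp n (Nat.lt_succ_diag_r n)).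
  rewrite IHn, hinge_right, S_INR; [lra | lra | intros; apply hp; lia].
Qed.

Lemma hinge_sum_reflect p n z :
  hinge_sum (fun i => 1 - p i) n (1 - z) = hinge_sum p n z + psum p n - INR n * z.
Proof.
  induction n; cbn [hinge_sum psum]; [simpl; lra|]. rewrite IHn, S_INR.
  destruct (Rle_dec (p n) z).
  - rewrite (hinge_right (p n) z), (hinge_left (1 - p n) (1 - z)) by lra. lra.
  - rewrite (hinge_left (p n) z), (hinge_right (1 - p n) (1 - z)) by lra. lra.
Qed.

Lemma count_lt_reflect p n z : count_lt (fun i => 1 - p i) n (1 - z) = count_gt p n z.
Proof.
  induction n; simpl; auto. rewrite IHn.
  destruct (Rlt_dec (1 - p n) (1 - z)), (Rlt_dec z (p n)); lra || reflexivity.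
Qed.

Lemma count_lt_eq_gt p n x : (count_lt p n x + count_eq p n x + count_gt p n x = n)%nat.
Proof.
  induction n; simpl; auto.
  destruct (Rlt_dec (p n) x), (Req_EM_T (p n) x), (Rlt_dec x (p n)); lra || lia.
Qed.

Lemma count_eq_absent p n x : (forall i, (i < n)%nat -> p i <> x) -> count_eq p n x = O.
Proof.
  induction n; simpl; intros hx; auto.
  rewrite IHn by (intros; apply hx; lia).
  destruct (Req_EM_T (p n) x) as [e|_]; [destruct (hx n); auto|auto].
Qed.

Lemma count_eq_point p n j : distinct_pts p n -> (j < n)%nat -> count_eq p n (p j) = 1%nat.
Proof.
  induction n as [|n IH]; simpl; intros hd hj; [lia|].
  destruct (Req_EM_T (p n) (p j)) as [e|e].
  - assert (n = j) by (apply hd; auto; lia). subst j.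
    rewrite count_eq_absent; auto. intros i hi e'. apply hd in e'; lia.
  - rewrite IH; [lia| intros i k hi hk; apply hd; lia |].
    destruct (Nat.eq_dec j n); [subst; tauto | lia].
Qed.

Lemma count_lt_pos p n x : count_lt p n x <> O -> exists i, (i < n)%nat /\ p i < x.
Proof.
  induction n; simpl; intros hc; [lia|].
  destruct (Rlt_dec (p n) x); [exists n; split; auto|].
  destruct IHn as [i [hi hx]]; [lia|]. exists i; split; auto.
Qed.

Lemma count_lt_no_between p n y z : y < z -> (forall i, (i < n)%nat -> ~ (y < p i < z)) ->
  count_lt p n z = (count_lt p n y + count_eq p n y)%nat.
Proof.
  intros hyz; induction n; simpl; intros hgap; auto.
  rewrite IHn by (intros; apply hgap; lia).
  pose proof (hgap n (Nat.lt_succ_diag_r n)).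
  destruct (Rlt_dec (p n) z), (Rlt_dec (p n) y), (Req_EM_T (p n) y); lra || lia.
Qed.

Lemma hinge_sum_no_between p n y z : y < z -> (forall i, (i < n)%nat -> ~ (y < p i < z)) ->
  hinge_sum p n z - hinge_sum p n y = INR (count_lt p n z) * (z - y).
Proof.
  intros hyz; induction n; simpl; intros hgap; [lra|].
  rewrite plus_INR. pose proof (IHn ltac:(intros; apply hgap; lia)).
  pose proof (hgap n (Nat.lt_succ_diag_r n)).
  destruct (Rlt_dec (p n) z).
  - rewrite (hinge_right _ z), (hinge_right _ y) by lra. simpl; lra.
  - rewrite (hinge_left _ z), (hinge_left _ y) by lra. simpl; lra.
Qed.

Lemma exists_max_below p n z : (exists i, (i < n)%nat /\ p i < z) ->
  exists j, (j < n)%nat /\ p j < z /\ forall i, (i < n)%nat -> ~ (p j < p i < z).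
Proof.
  induction n as [|n IH]; intros [i [hi hz]]; [lia|].
  destruct (classic (exists k, (k < n)%nat /\ p k < z)) as [below|none].
  - destruct (IH below) as [j [hj [hjz hmax]]].
    destruct (classic (p j < p n < z)) as [between|outside].
    + exists n. split; [lia|split; [lra|]]. intros k hk hk'.
      destruct (Nat.eq_dec k n); [subst; lra|]. apply (hmax k); [lia|lra].
    + exists j. split; [lia|split; [lra|]]. intros k hk hk'.
      destruct (Nat.eq_dec k n); [subst; tauto|]. apply (hmax k); [lia|lra].
  - assert (hnz : p n < z).
    { destruct (Nat.eq_dec i n); [subst; auto|]. destruct none; exists i; split; [lia|auto]. }
    exists n. split; [lia|split; [auto|]]. intros k hk hk'.
    destruct (Nat.eq_dec k n); [subst; lra|]. apply none; exists k; split; [lia|lra].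
Qed.

Definition supp_slope (G : R -> R) (x s : R) : Prop :=
  forall y, 0 <= y <= 1 -> G y <= G x + s * (y - x).

Definition kinked_at (G : R -> R) (x : R) : Prop :=
  exists u w : Z, (w + 1 <= u)%Z /\ supp_slope G x (IZR u) /\ supp_slope G x (IZR w).

Lemma supp_slope_antitone G a b sa sb : 0 <= a -> a < b -> b <= 1 ->
  supp_slope G a sa -> supp_slope G b sb -> sb <= sa.
Proof.
  intros h0 hab h1 hsa hsb.
  pose proof (hsa b ltac:(lra)). pose proof (hsb a ltac:(lra)).
  destruct (Rle_dec sb sa); auto.
  assert ((sb - sa) * (b - a) > 0) by (apply Rmult_gt_0_compat; lra). nra.
Qed.

Lemma supp_slope_reflect G x s :
  supp_slope G x s -> supp_slope (fun y => G (1 - y)) (1 - x) (- s).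
Proof.
  intros hs y hy. specialize (hs (1 - y) ltac:(lra)).
  replace (1 - (1 - x)) with x by ring. lra.
Qed.

Lemma kinked_at_reflect G x : kinked_at G x -> kinked_at (fun y => G (1 - y)) (1 - x).
Proof.
  intros [u [w [huw [hu hw]]]]. exists (- w)%Z, (- u)%Z.
  split; [lia|]. rewrite !opp_IZR. split; apply supp_slope_reflect; auto.
Qed.

(* Induction over the points below [z], walking down from the nearest one: at each
   point the integer slope drops by at least one while [hinge_sum] gains one. *)
Lemma hinge_sum_lower_left G p n :
  (forall i, (i < n)%nat -> 0 < p i < 1) -> distinct_pts p n -> G 0 = 0 ->
  (forall i, (i < n)%nat -> kinked_at G (p i)) ->
  forall z b, 0 < z < 1 -> supp_slope G z (IZR b) ->
  (IZR b + INR (count_lt p n z)) * z <= G z + hinge_sum p n z.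
Proof.
  intros hp hd G0 hk z b hz hb.
  remember (count_lt p n z) as k eqn:ek. revert z b hz hb ek.
  induction k as [|k IH]; intros z b hz hb ek.
  - pose proof (hb 0 ltac:(lra)). pose proof (hinge_sum_nonneg p n z). simpl; lra.
  - destruct (exists_max_below p n z) as [j [hj [hjz hgap]]].
    { apply count_lt_pos. lia. }
    assert (ekj : k = count_lt p n (p j)).
    { rewrite (count_lt_no_between p n (p j) z), count_eq_point in ek; auto. lia. }
    destruct (hk j hj) as [u [w [huw [hu hw]]]].
    pose proof (hp j hj).
    assert (IZR b <= IZR w) by (apply (supp_slope_antitone G (p j) z); auto; lra).
    assert (IZR w + 1 <= IZR u) by (rewrite <- plus_IZR; apply IZR_le; lia).
    pose proof (IH (p j) u ltac:(lra) hu ekj).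
    pose proof (hinge_sum_no_between p n (p j) z hjz hgap) as hdiff.
    pose proof (hb (p j) ltac:(lra)).
    rewrite <- ek, S_INR in hdiff. rewrite S_INR.
    assert ((IZR b + INR k + 1) * p j <= (IZR u + INR k) * p j)
      by (apply Rmult_le_compat_r; lra).
    nra.
Qed.

Lemma hinge_sum_lower_right G p n :
  (forall i, (i < n)%nat -> 0 < p i < 1) -> distinct_pts p n -> G 1 = 0 ->
  (forall i, (i < n)%nat -> kinked_at G (p i)) ->
  forall z b, 0 < z < 1 -> supp_slope G z (IZR b) ->
  INR n - psum p n - (IZR b + INR (count_lt p n z + count_eq p n z)) * (1 - z)
    <= G z + hinge_sum p n z.
Proof.
  intros hp hd G1 hk z b hz hb.
  assert (hrefl := hinge_sum_lower_left (fun y => G (1 - y)) (fun i => 1 - p i) n).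
  specialize (hrefl ltac:(intros i hi; pose proof (hp i hi); lra)
                    ltac:(intros i k hi hk' e; apply hd; auto; lra)
                    ltac:(cbv beta; replace (1 - 0) with 1 by ring; auto)
                    ltac:(intros i hi; apply kinked_at_reflect; auto)
                    (1 - z) (- b)%Z ltac:(lra)).
  rewrite opp_IZR in hrefl. specialize (hrefl (supp_slope_reflect G z _ hb)).
  rewrite count_lt_reflect, hinge_sum_reflect in hrefl.
  replace (1 - (1 - z)) with z in hrefl by ring.
  pose proof (count_lt_eq_gt p n z) as hcount.
  apply (f_equal INR) in hcount. rewrite !plus_INR in hcount. rewrite plus_INR.
  nra.
Qed.

Lemma finite_gap (f : Z -> R) (c : R) (P : Z -> Prop) (lo hi : Z) :
  (forall v, (lo <= v <= hi)%Z -> P v -> c < f v) ->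
  exists eps, 0 < eps /\ forall v, (lo <= v <= hi)%Z -> P v -> c + eps <= f v.
Proof.
  intros hgt.
  enough (forall k : nat, exists eps, 0 < eps /\
            forall v, (lo <= v < lo + Z.of_nat k)%Z -> (v <= hi)%Z -> P v -> c + eps <= f v)
    as hk.
  { destruct (hk (Z.to_nat (hi - lo + 1))) as [eps [he hv]].
    exists eps; split; auto. intros v hv' pv. apply hv; auto; lia. }
  induction k as [|k [eps [he hv]]].
  - exists 1. split; [lra|]. intros v hv'. lia.
  - set (w := (lo + Z.of_nat k)%Z).
    destruct (classic ((w <= hi)%Z /\ P w)) as [[hw pw]|nw].
    + assert (c < f w) by (apply hgt; auto; unfold w; lia).
      exists (Rmin eps (f w - c)). split; [apply Rmin_pos; lra|].
      intros v hv' hvhi pv. pose proof (Rmin_l eps (f w - c)). pose proof (Rmin_r eps (f w - c)).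
      destruct (Z.eq_dec v w) as [->|nvw]; [lra|].
      pose proof (hv v ltac:(unfold w in *; lia) hvhi pv). lra.
    + exists eps. split; auto. intros v hv' hvhi pv.
      destruct (Z.eq_dec v w) as [->|nvw]; [tauto|]. apply hv; auto. unfold w in *; lia.
Qed.

Lemma int_bound (r : R) : exists B : Z, forall v : Z, ~ (- B <= v <= B)%Z -> r < Rabs (IZR v).
Proof.
  exists (up r). intros v hv. destruct (archimed r) as [hr _].
  assert (up r + 1 <= Z.abs v)%Z by lia. apply IZR_le in H.
  rewrite abs_IZR, plus_IZR in H. lra.
Qed.

Lemma scaled_le_abs z x : 0 <= z <= 1 -> - Rabs x <= z * x <= Rabs x.
Proof.
  intros hz. apply Rabs_le_between. rewrite Rabs_mult, (Rabs_pos_eq z) by lra.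
  pose proof (Rabs_pos x). nra.
Qed.

Lemma line_gap_persists (A0 s0 A s h y e : R) :
  A0 + h * s0 + e <= A + h * s -> Rabs (y - h) * (Rabs s0 + Rabs s) < e ->
  A0 + y * s0 < A + y * s.
Proof.
  intros hgap hclose.
  assert ((y - h) * (s0 - s) <= Rabs (y - h) * (Rabs s0 + Rabs s)).
  { eapply Rle_trans; [apply Rle_abs|]. rewrite Rabs_mult.
    apply Rmult_le_compat_l; [apply Rabs_pos|].
    pose proof (Rabs_triang s0 (- s)) as htri. rewrite Rabs_Ropp in htri. exact htri. }
  nra.
Qed.

Section InfimumOfLines.

Variables (G : R -> R) (a : Z -> R).
Hypothesis Grep : forall z, 0 <= z <= 1 ->
  (forall v : Z, G z <= a v + z * IZR v) /\
  (forall m, (forall v : Z, m <= a v + z * IZR v) -> m <= G z).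
Hypotheses (G0 : G 0 = 0) (G1 : G 1 = 0).

Lemma far_slope_large c y M v : 0 < c -> c <= y <= 1 - c -> M < c * Rabs (IZR v) ->
  M < a v + y * IZR v.
Proof.
  intros hc hy hM.
  destruct (Grep 0 ltac:(lra)) as [h0 _]. specialize (h0 v).
  destruct (Grep 1 ltac:(lra)) as [h1 _]. specialize (h1 v).
  destruct (Rle_dec 0 (IZR v)).
  - rewrite Rabs_right in hM by lra. nra.
  - rewrite Rabs_left in hM by lra. nra.
Qed.

Lemma slopes_outside_range c M : 0 < c ->
  exists B : Z, forall v y, ~ (- B <= v <= B)%Z -> c <= y <= 1 - c -> M < a v + y * IZR v.
Proof.
  intros hc. destruct (int_bound (M / c)) as [B hB]. exists B. intros v y hv hy.
  apply (far_slope_large c); auto.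
  replace M with (c * (M / c)) by (field; lra). apply Rmult_lt_compat_l; auto.
Qed.

Lemma inf_attained z : 0 < z < 1 -> exists v, G z = a v + z * IZR v.
Proof.
  intros hz. apply NNPP. intros none.
  destruct (Grep z ltac:(lra)) as [hle hglb].
  assert (hlt : forall v, G z < a v + z * IZR v).
  { intros v. destruct (Rle_lt_or_eq_dec _ _ (hle v)); auto. destruct none; eauto. }
  set (c := Rmin z (1 - z)).
  assert (hc : 0 < c) by (apply Rmin_pos; lra).
  assert (hzc : c <= z <= 1 - c)
    by (unfold c; pose proof (Rmin_l z (1 - z)); pose proof (Rmin_r z (1 - z)); lra).
  destruct (slopes_outside_range c (G z + 1)) as [B hB]; auto.
  destruct (finite_gap (fun v => a v + z * IZR v) (G z) (fun _ => True) (- B) B)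
    as [e [he hgap]].
  { intros; apply hlt. }
  assert (G z + Rmin e 1 <= G z).
  { apply hglb. intros v. pose proof (Rmin_l e 1). pose proof (Rmin_r e 1).
    destruct (classic (- B <= v <= B)%Z) as [inr|outr].
    - pose proof (hgap v inr I). lra.
    - pose proof (hB v z outr hzc). lra. }
  assert (0 < Rmin e 1) by (apply Rmin_pos; lra). lra.
Qed.

Lemma inf_attained_supp z v : G z = a v + z * IZR v -> supp_slope G z (IZR v).
Proof. intros e y hy. destruct (Grep y hy) as [h _]. specialize (h v). lra. Qed.

(* If only the slope [v0] attains the infimum at [h], the other lines stay a uniform
   distance above near [h]: finitely many by [finite_gap], the rest by [far_slope_large]. *)
Lemma locally_affine_of_unique h v0 : 0 < h < 1 -> G h = a v0 + h * IZR v0 ->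
  (forall v, G h = a v + h * IZR v -> v = v0) ->
  exists d, 0 < d /\ forall y, Rabs (y - h) < d -> G y = a v0 + y * IZR v0.
Proof.
  intros hh e0 uniq.
  set (c := Rmin h (1 - h) / 2).
  assert (c <= h / 2 /\ c <= (1 - h) / 2 /\ 0 < c) as [hc1 [hc2 hc]].
  { pose proof (Rmin_l h (1 - h)). pose proof (Rmin_r h (1 - h)).
    assert (0 < Rmin h (1 - h)) by (apply Rmin_pos; lra). unfold c; lra. }
  set (M := Rabs (a v0) + Rabs (IZR v0)).
  destruct (slopes_outside_range c M hc) as [B hB].
  destruct (finite_gap (fun v => a v + h * IZR v) (G h) (fun v => v <> v0) (- B) B)
    as [e [he hgap]].
  { intros v _ nv. destruct (Grep h ltac:(lra)) as [hle _].
    destruct (Rle_lt_or_eq_dec _ _ (hle v)); auto. destruct nv; auto. }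
  set (K := Rabs (IZR B) + Rabs (IZR v0) + 1).
  assert (0 < K)
    by (unfold K; pose proof (Rabs_pos (IZR B)); pose proof (Rabs_pos (IZR v0)); lra).
  set (d := Rmin c (e / (2 * K))).
  assert (0 < e / (2 * K)) by (apply Rdiv_lt_0_compat; lra).
  assert (d <= c /\ d * K <= e / 2) as [hdc hdK].
  { unfold d. pose proof (Rmin_l c (e / (2 * K))). pose proof (Rmin_r c (e / (2 * K))).
    split; auto. replace (e / 2) with (e / (2 * K) * K) by (field; lra).
    apply Rmult_le_compat_r; lra. }
  exists d. split; [apply Rmin_pos; lra|]. intros y hy.
  pose proof (Rabs_def2 _ _ hy) as [hy1 hy2].
  assert (hyc : c <= y <= 1 - c) by lra.
  destruct (inf_attained y ltac:(lra)) as [v ev].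
  destruct (Z.eq_dec v v0) as [->|nv]; [exact ev|exfalso].
  destruct (Grep y ltac:(lra)) as [hle _]. pose proof (hle v0).
  destruct (classic (- B <= v <= B)%Z) as [inr|outr].
  - pose proof (hgap v inr nv) as hfar. simpl in hfar.
    assert (Rabs (IZR v) <= Rabs (IZR B)) by (rewrite <- !abs_IZR; apply IZR_le; lia).
    assert (hclose : Rabs (y - h) * (Rabs (IZR v0) + Rabs (IZR v)) < e).
    { apply Rle_lt_trans with (d * K); [|lra].
      pose proof (Rabs_pos (IZR v)). pose proof (Rabs_pos (IZR v0)).
      apply Rmult_le_compat; [apply Rabs_pos | lra | lra | unfold K; lra]. }
    pose proof (line_gap_persists (a v0) (IZR v0) (a v) (IZR v) h y e ltac:(lra) hclose). lra.
  - pose proof (hB v y outr hyc).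
    pose proof (Rle_abs (a v0)). pose proof (scaled_le_abs y (IZR v0) ltac:(lra)).
    unfold M in *. lra.
Qed.

Lemma kink_of_not_derivable h : 0 < h < 1 -> ~ ex_derive G h ->
  exists u w : Z, (w + 1 <= u)%Z /\ G h = a u + h * IZR u /\ G h = a w + h * IZR w.
Proof.
  intros hh nd. apply NNPP. intros nk. apply nd.
  destruct (inf_attained h hh) as [v0 e0].
  assert (uniq : forall v, G h = a v + h * IZR v -> v = v0).
  { intros v ev. destruct (Z.lt_total v v0) as [l|[l|l]]; auto; destruct nk.
    - exists v0, v. split; [lia|auto].
    - exists v, v0. split; [lia|auto]. }
  destruct (locally_affine_of_unique h v0 hh e0 uniq) as [d [hd hloc]].
  exists (IZR v0). apply (is_derive_ext_loc (fun y => a v0 + y * IZR v0)).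
  - exists (mkposreal d hd). intros y hy. symmetry. apply hloc, hy.
  - auto_derive; auto; ring.
Qed.

End InfimumOfLines.

Lemma trop_series_supp G z : is_trop_series 0 1 G -> 0 < z < 1 ->
  exists v : Z, supp_slope G z (IZR v).
Proof.
  intros [_ [G0 [G1 [a ha]]]] hz. destruct (inf_attained G a ha G0 G1 z hz) as [v ev].
  exists v. apply (inf_attained_supp G a ha z v ev).
Qed.

Lemma trop_series_kinked G h : is_trop_series 0 1 G -> non_smooth 0 1 G h -> kinked_at G h.
Proof.
  intros [_ [G0 [G1 [a ha]]]] [hh nd].
  destruct (kink_of_not_derivable G a ha G0 G1 h hh nd) as [u [w [huw [eu ew]]]].
  exists u, w. split; auto. split; eapply inf_attained_supp; eauto.
Qed.

Definition line (sc : Z * R) (z : R) : R := snd sc + z * IZR (fst sc).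

Definition is_min_of_lines (f : R -> R) : Prop :=
  exists L : list (Z * R), forall z,
    (forall sc, In sc L -> f z <= line sc z) /\ exists sc, In sc L /\ f z = line sc z.

Lemma min_of_lines_ext f g : (forall z, f z = g z) -> is_min_of_lines f -> is_min_of_lines g.
Proof.
  intros e [L hL]. exists L. intros z. rewrite <- e. apply hL.
Qed.

Lemma min_of_lines_linear k : is_min_of_lines (fun z => IZR k * z).
Proof.
  exists ((k, 0) :: nil). intros z. unfold line; simpl. split.
  - intros sc [<-|[]]. simpl; lra.
  - exists (k, 0). split; [auto|]. simpl; lra.
Qed.

Lemma min_of_lines_neg_hinge c : is_min_of_lines (fun z => - hinge c z).
Proof.
  exists ((0%Z, 0) :: ((-1)%Z, c) :: nil). intros z. unfold line; simpl.
  pose proof (hinge_nonneg c z). pose proof (hinge_ge_sub c z). split.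
  - intros sc [<-|[<-|[]]]; simpl; lra.
  - destruct (Rle_dec z c).
    + exists (0%Z, 0). split; [auto|]. rewrite hinge_left by lra. simpl; lra.
    + exists ((-1)%Z, c). split; [auto|]. rewrite hinge_right by lra. simpl; lra.
Qed.

Lemma min_of_lines_plus f g : is_min_of_lines f -> is_min_of_lines g ->
  is_min_of_lines (fun z => f z + g z).
Proof.
  intros [L1 h1] [L2 h2].
  set (add := fun ss : (Z * R) * (Z * R) =>
                ((fst (fst ss) + fst (snd ss))%Z, snd (fst ss) + snd (snd ss))).
  exists (map add (list_prod L1 L2)). intros z.
  destruct (h1 z) as [le1 [s1 [i1 e1]]], (h2 z) as [le2 [s2 [i2 e2]]].
  unfold line in *. split.
  - intros sc hin. apply in_map_iff in hin as [[t1 t2] [<- hin]].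
    apply in_prod_iff in hin as [j1 j2].
    pose proof (le1 t1 j1). pose proof (le2 t2 j2). simpl. rewrite plus_IZR. lra.
  - exists (add (s1, s2)). split.
    + apply in_map, in_prod; auto.
    + simpl. rewrite plus_IZR. lra.
Qed.

Lemma min_of_lines_neg_hinge_sum p n : is_min_of_lines (fun z => - hinge_sum p n z).
Proof.
  induction n as [|n IH]; simpl.
  - apply (min_of_lines_ext (fun z => IZR 0 * z)); [intros; simpl; ring|].
    apply min_of_lines_linear.
  - apply (min_of_lines_ext (fun z => - hinge_sum p n z + - hinge (p n) z)); [intros; ring|].
    apply min_of_lines_plus; auto using min_of_lines_neg_hinge.
Qed.

Definition min_intercept (L : list (Z * R)) (D : R) (v : Z) : R :=
  fold_right (fun sc acc => if Z.eq_dec (fst sc) v then Rmin (snd sc) acc else acc) D L.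

Lemma min_intercept_lower L D v z m : (forall sc, In sc L -> m <= line sc z) ->
  m <= D + z * IZR v -> m <= min_intercept L D v + z * IZR v.
Proof.
  induction L as [|sc L IH]; simpl; intros hL hD; auto.
  destruct (Z.eq_dec (fst sc) v) as [e|_]; [|auto].
  pose proof (hL sc (or_introl eq_refl)). unfold line in *. rewrite e in *.
  unfold Rmin. destruct (Rle_dec (snd sc) (min_intercept L D v)); auto.
Qed.

Lemma min_intercept_le L D sc : In sc L -> min_intercept L D (fst sc) <= snd sc.
Proof.
  induction L as [|sc' L IH]; simpl; [tauto|]. intros [->|hin].
  - destruct (Z.eq_dec (fst sc) (fst sc)); [apply Rmin_l|tauto].
  - destruct (Z.eq_dec (fst sc') (fst sc)); auto.
    pose proof (IH hin). pose proof (Rmin_r (snd sc') (min_intercept L D (fst sc))). lra.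
Qed.

(* A slope absent from the list gets an intercept [D v] large enough to be inactive on [0,1]. *)
Lemma min_of_lines_inf_rep f : is_min_of_lines f -> exists a : Z -> R,
  forall z, 0 <= z <= 1 ->
    (forall v : Z, f z <= a v + z * IZR v) /\
    (forall m, (forall v : Z, m <= a v + z * IZR v) -> m <= f z).
Proof.
  intros [L hL]. destruct (hL 0) as [_ [sc0 [i0 _]]].
  set (D := fun v : Z => snd sc0 + Rabs (IZR (fst sc0)) + Rabs (IZR v)).
  exists (fun v => min_intercept L (D v) v). intros z hz.
  destruct (hL z) as [hle [sc [isc esc]]]. split.
  - intros v. apply min_intercept_lower; auto.
    pose proof (hle sc0 i0). unfold line, D in *.
    pose proof (scaled_le_abs z (IZR (fst sc0)) hz). pose proof (scaled_le_abs z (IZR v) hz).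
    lra.
  - intros m hm. specialize (hm (fst sc)).
    pose proof (min_intercept_le L (D (fst sc)) sc isc). unfold line in esc. lra.
Qed.

Lemma min_of_lines_nonneg f z : is_min_of_lines f -> f 0 = 0 -> f 1 = 0 ->
  0 <= z <= 1 -> 0 <= f z.
Proof.
  intros [L hL] f0 f1 hz. destruct (hL z) as [_ [sc [isc ->]]].
  pose proof (proj1 (hL 0) sc isc). pose proof (proj1 (hL 1) sc isc).
  unfold line in *. rewrite f0 in *. rewrite f1 in *. nra.
Qed.

Lemma min_of_lines_trop_series f : is_min_of_lines f -> f 0 = 0 -> f 1 = 0 ->
  is_trop_series 0 1 f.
Proof.
  intros hf f0 f1. split; [intros; apply min_of_lines_nonneg; auto|].
  split; [auto|split; [auto|]]. apply min_of_lines_inf_rep; auto.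
Qed.

Definition left_affine (f : R -> R) (h l : R) : Prop :=
  exists d, 0 < d /\ forall t, - d < t < 0 -> f (h + t) = f h + l * t.
Definition right_affine (f : R -> R) (h l : R) : Prop :=
  exists d, 0 < d /\ forall t, 0 < t < d -> f (h + t) = f h + l * t.

Lemma left_affine_linear A h : left_affine (fun z => A * z) h A.
Proof. exists 1. split; [lra|]. intros; ring. Qed.
Lemma right_affine_linear A h : right_affine (fun z => A * z) h A.
Proof. exists 1. split; [lra|]. intros; ring. Qed.

Lemma left_affine_plus f g h a b : left_affine f h a -> left_affine g h b ->
  left_affine (fun z => f z + g z) h (a + b).
Proof.
  intros [d1 [h1 e1]] [d2 [h2 e2]]. exists (Rmin d1 d2). split; [apply Rmin_pos; auto|].
  intros t ht. pose proof (Rmin_l d1 d2). pose proof (Rmin_r d1 d2).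
  rewrite e1, e2 by lra. ring.
Qed.
Lemma right_affine_plus f g h a b : right_affine f h a -> right_affine g h b ->
  right_affine (fun z => f z + g z) h (a + b).
Proof.
  intros [d1 [h1 e1]] [d2 [h2 e2]]. exists (Rmin d1 d2). split; [apply Rmin_pos; auto|].
  intros t ht. pose proof (Rmin_l d1 d2). pose proof (Rmin_r d1 d2).
  rewrite e1, e2 by lra. ring.
Qed.

Lemma left_affine_minus f g h a b : left_affine f h a -> left_affine g h b ->
  left_affine (fun z => f z - g z) h (a - b).
Proof.
  intros [d1 [h1 e1]] [d2 [h2 e2]]. exists (Rmin d1 d2). split; [apply Rmin_pos; auto|].
  intros t ht. pose proof (Rmin_l d1 d2). pose proof (Rmin_r d1 d2).
  rewrite e1, e2 by lra. ring.
Qed.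
Lemma right_affine_minus f g h a b : right_affine f h a -> right_affine g h b ->
  right_affine (fun z => f z - g z) h (a - b).
Proof.
  intros [d1 [h1 e1]] [d2 [h2 e2]]. exists (Rmin d1 d2). split; [apply Rmin_pos; auto|].
  intros t ht. pose proof (Rmin_l d1 d2). pose proof (Rmin_r d1 d2).
  rewrite e1, e2 by lra. ring.
Qed.

Lemma left_affine_hinge c h : left_affine (hinge c) h (if Rlt_dec c h then 1 else 0).
Proof.
  destruct (Rlt_dec c h).
  - exists (h - c). split; [lra|]. intros t ht. rewrite !hinge_right by lra. lra.
  - exists 1. split; [lra|]. intros t ht. rewrite !hinge_left by lra. lra.
Qed.
Lemma right_affine_hinge c h : right_affine (hinge c) h (if Rle_dec c h then 1 else 0).
Proof.
  destruct (Rle_dec c h).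
  - exists 1. split; [lra|]. intros t ht. rewrite !hinge_right by lra. lra.
  - exists (c - h). split; [lra|]. intros t ht. rewrite !hinge_left by lra. lra.
Qed.

Lemma left_affine_hinge_sum p n h : left_affine (hinge_sum p n) h (INR (count_lt p n h)).
Proof.
  induction n; simpl.
  - exists 1. split; [lra|]. intros; ring.
  - rewrite plus_INR.
    replace (INR (if Rlt_dec (p n) h then 1%nat else 0%nat))
      with (if Rlt_dec (p n) h then 1 else 0) by (destruct (Rlt_dec (p n) h); auto).
    apply (left_affine_plus (hinge_sum p n) (hinge (p n))); auto using left_affine_hinge.
Qed.
Lemma right_affine_hinge_sum p n h :
  right_affine (hinge_sum p n) h (INR (count_lt p n h + count_eq p n h)).
Proof.
  induction n; simpl.
  - exists 1. split; [lra|]. intros; ring.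
  - replace (INR (count_lt p n h + (if Rlt_dec (p n) h then 1 else 0) +
               (count_eq p n h + (if Req_EM_T (p n) h then 1 else 0))))
      with (INR (count_lt p n h + count_eq p n h) + if Rle_dec (p n) h then 1 else 0).
    + apply (right_affine_plus (hinge_sum p n) (hinge (p n))); auto using right_affine_hinge.
    + rewrite !plus_INR.
      destruct (Rle_dec (p n) h), (Rlt_dec (p n) h), (Req_EM_T (p n) h); simpl; lra.
Qed.

Lemma left_affine_agree f g h l : 0 < h -> (forall t, 0 <= t <= 1 -> f t = g t) -> h < 1 ->
  left_affine f h l -> left_affine g h l.
Proof.
  intros h0 e h1 [d [hd hf]]. exists (Rmin d h). split; [apply Rmin_pos; auto|].
  intros t ht. pose proof (Rmin_l d h). pose proof (Rmin_r d h).
  rewrite <- !e by lra. apply hf; lra.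
Qed.
Lemma right_affine_agree f g h l : 0 < h -> (forall t, 0 <= t <= 1 -> f t = g t) -> h < 1 ->
  right_affine f h l -> right_affine g h l.
Proof.
  intros h0 e h1 [d [hd hf]]. exists (Rmin d (1 - h)). split; [apply Rmin_pos; lra|].
  intros t ht. pose proof (Rmin_l d (1 - h)). pose proof (Rmin_r d (1 - h)).
  rewrite <- !e by lra. apply hf; lra.
Qed.

Lemma left_affine_deriv f h l : left_affine f h l -> is_left_deriv f h l.
Proof.
  intros [d [hd hf]]. apply (filterlim_ext_loc (fun _ => l)); [|apply filterlim_const].
  exists (mkposreal d hd). intros t ht hneg. change (Rabs (t - 0) < d) in ht.
  rewrite Rminus_0_r in ht. apply Rabs_def2 in ht. rewrite hf by lra. field. lra.
Qed.
Lemma right_affine_deriv f h l : right_affine f h l -> is_right_deriv f h l.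
Proof.
  intros [d [hd hf]]. apply (filterlim_ext_loc (fun _ => l)); [|apply filterlim_const].
  exists (mkposreal d hd). intros t ht hpos. change (Rabs (t - 0) < d) in ht.
  rewrite Rminus_0_r in ht. apply Rabs_def2 in ht. rewrite hf by lra. field. lra.
Qed.

Lemma not_derivable_of_slopes f h a b : left_affine f h a -> right_affine f h b -> a <> b ->
  ~ ex_derive f h.
Proof.
  intros [d1 [h1 e1]] [d2 [h2 e2]] nab [l hl].
  apply is_derive_Reals in hl.
  assert (heps : 0 < Rabs (a - b) / 2)
    by (apply Rdiv_lt_0_compat; [apply Rabs_pos_lt; lra|lra]).
  destruct (hl _ heps) as [del hdel]. pose proof (cond_pos del).
  set (t1 := - Rmin d1 del / 2). set (t2 := Rmin d2 del / 2).
  pose proof (Rmin_l d1 del). pose proof (Rmin_r d1 del).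
  pose proof (Rmin_l d2 del). pose proof (Rmin_r d2 del).
  assert (0 < Rmin d1 del) by (apply Rmin_pos; lra).
  assert (0 < Rmin d2 del) by (apply Rmin_pos; lra).
  pose proof (hdel t1 ltac:(unfold t1; lra) ltac:(unfold t1; rewrite Rabs_left; lra)) as A1.
  pose proof (hdel t2 ltac:(unfold t2; lra) ltac:(unfold t2; rewrite Rabs_right; lra)) as A2.
  rewrite e1 in A1 by (unfold t1; lra). rewrite e2 in A2 by (unfold t2; lra).
  replace ((f h + a * t1 - f h) / t1) with a in A1 by (field; unfold t1; lra).
  replace ((f h + b * t2 - f h) / t2) with b in A2 by (field; unfold t2; lra).
  pose proof (Rabs_triang (a - l) (l - b)) as tri.
  replace (a - l + (l - b)) with (a - b) in tri by ring.
  rewrite Rabs_minus_sym in A2. lra.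
Qed.

Lemma derivable_of_slopes f h a : left_affine f h a -> right_affine f h a -> ex_derive f h.
Proof.
  intros [d1 [h1 e1]] [d2 [h2 e2]]. exists a. apply is_derive_Reals.
  intros eps heps. assert (hd : 0 < Rmin d1 d2) by (apply Rmin_pos; auto).
  exists (mkposreal _ hd). simpl. intros t t0 ht.
  pose proof (Rmin_l d1 d2). pose proof (Rmin_r d1 d2). apply Rabs_def2 in ht.
  destruct (Rlt_dec t 0); [rewrite e1 by lra | rewrite e2 by lra];
    replace ((f h + a * t - f h) / t - a) with 0 by (field; auto); rewrite Rabs_R0; auto.
Qed.

Section MinimalSeries.

Variables (n : nat) (p : nat -> R) (m : Z) (q : R).
Hypotheses (hp : forall i, (i < n)%nat -> 0 < p i < 1) (hd : distinct_pts p n).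
Hypotheses (hm : IZR m + q = INR n - psum p n) (hq : 0 <= q < 1).

Definition F_inf (z : R) : R := IZR (m + 1) * z - hinge q z - hinge_sum p n z.

Definition slope_left (h : R) : R :=
  IZR (m + 1) - (if Rlt_dec q h then 1 else 0) - INR (count_lt p n h).
Definition slope_right (h : R) : R :=
  IZR (m + 1) - (if Rle_dec q h then 1 else 0) - INR (count_lt p n h + count_eq p n h).
Definition jump (h : R) : nat := ((if Req_EM_T q h then 1 else 0) + count_eq p n h)%nat.

Lemma slope_left_minus_right h : slope_left h - slope_right h = INR (jump h).
Proof.
  unfold slope_left, slope_right, jump. rewrite !plus_INR.
  destruct (Rlt_dec q h), (Rle_dec q h), (Req_EM_T q h); simpl; lra.
Qed.

Lemma F_inf_at0 : F_inf 0 = 0.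
Proof. unfold F_inf. rewrite hinge_sum_at0, hinge_left by (auto || lra). lra. Qed.

Lemma F_inf_at1 : F_inf 1 = 0.
Proof.
  unfold F_inf. rewrite hinge_sum_at1, hinge_right, plus_IZR by (auto || lra). lra.
Qed.

Lemma F_inf_trop_series : is_trop_series 0 1 F_inf.
Proof.
  apply min_of_lines_trop_series; auto using F_inf_at0, F_inf_at1.
  apply (min_of_lines_ext (fun z => (IZR (m + 1) * z + - hinge q z) + - hinge_sum p n z));
    [intros; unfold F_inf; ring|].
  auto using min_of_lines_plus, min_of_lines_linear, min_of_lines_neg_hinge,
    min_of_lines_neg_hinge_sum.
Qed.

Lemma F_inf_germs F h : (forall z, 0 <= z <= 1 -> F z = F_inf z) -> 0 < h < 1 ->
  left_affine F h (slope_left h) /\ right_affine F h (slope_right h).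
Proof.
  intros agree hh. split.
  - apply (left_affine_agree F_inf); [lra | intros; symmetry; auto | lra |].
    apply left_affine_minus; [apply left_affine_minus|];
      auto using left_affine_linear, left_affine_hinge, left_affine_hinge_sum.
  - apply (right_affine_agree F_inf); [lra | intros; symmetry; auto | lra |].
    apply right_affine_minus; [apply right_affine_minus|];
      auto using right_affine_linear, right_affine_hinge, right_affine_hinge_sum.
Qed.

Lemma non_smooth_iff_jump F h : (forall z, 0 <= z <= 1 -> F z = F_inf z) ->
  non_smooth 0 1 F h <-> 0 < h < 1 /\ jump h <> O.
Proof.
  intros agree. pose proof (slope_left_minus_right h) as hjump.
  split; intros [hh hj]; split; auto; destruct (F_inf_germs F h agree hh) as [hl hr].
  - intros j0. rewrite j0 in hjump. apply hj, (derivable_of_slopes F h (slope_left h)); auto.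
    replace (slope_left h) with (slope_right h) by (simpl in hjump; lra). auto.
  - apply (not_derivable_of_slopes F h _ _ hl hr).
    pose proof (lt_0_INR (jump h) ltac:(lia)). lra.
Qed.

Lemma F_inf_non_smooth i : (i < n)%nat -> non_smooth 0 1 F_inf (p i).
Proof.
  intros hi. apply non_smooth_iff_jump; [auto|]. split; [auto|].
  unfold jump. rewrite count_eq_point; auto. lia.
Qed.

Lemma F_inf_le G : is_trop_series 0 1 G -> (forall i, (i < n)%nat -> non_smooth 0 1 G (p i)) ->
  forall z, 0 <= z <= 1 -> F_inf z <= G z.
Proof.
  intros hG hns z hz.
  pose proof hG as [_ [G0 [G1 _]]].
  destruct (Req_dec z 0) as [->|nz0]; [rewrite F_inf_at0, G0; lra|].
  destruct (Req_dec z 1) as [->|nz1]; [rewrite F_inf_at1, G1; lra|].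
  assert (hk : forall i, (i < n)%nat -> kinked_at G (p i))
    by (intros; apply trop_series_kinked; auto).
  assert (hz' : 0 < z < 1) by lra.
  assert (exists al be : Z, supp_slope G z (IZR al) /\ supp_slope G z (IZR be) /\
            IZR be + INR (count_eq p n z) <= IZR al) as [al [be [hal [hbe hab]]]].
  { destruct (classic (exists j, (j < n)%nat /\ p j = z)) as [[j [hj <-]]|none].
    - rewrite count_eq_point by auto. destruct (hk j hj) as [u [w [huw [hu hw]]]].
      exists u, w. split; [auto|split; [auto|]].
      change (INR 1) with 1. rewrite <- plus_IZR. apply IZR_le. lia.
    - rewrite count_eq_absent by (intros i hi e; apply none; eauto).
      destruct (trop_series_supp G z hG hz') as [v hv].
      exists v, v. simpl. repeat split; auto; lra. }
  pose proof (hinge_sum_lower_left G p n hp hd G0 hk z al hz' hal) as hleft.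
  pose proof (hinge_sum_lower_right G p n hp hd G1 hk z be hz' hbe) as hright.
  rewrite plus_INR in hright.
  pose proof (hinge_nonneg q z). pose proof (hinge_ge_sub q z).
  unfold F_inf. rewrite plus_IZR.
  set (N := count_lt p n z) in *.
  assert (eN : IZR (al + Z.of_nat N) = IZR al + INR N) by (rewrite plus_IZR, INR_IZR_INZ; auto).
  (* Either the left bound already reaches [(m+1) z], or all slopes are at most [m]
     and the right bound gives [m z + q]. *)
  destruct (Z_le_gt_dec (m + 1) (al + Z.of_nat N)) as [big|small].
  - apply IZR_le in big. rewrite eN, plus_IZR in big.
    assert ((IZR m + 1) * z <= (IZR al + INR N) * z) by (apply Rmult_le_compat_r; lra).
    lra.
  - assert (small' : (al + Z.of_nat N <= m)%Z) by lia. apply IZR_le in small'. rewrite eN in small'.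
    assert ((IZR be + INR N + INR (count_eq p n z)) * (1 - z) <= IZR m * (1 - z))
      by (apply Rmult_le_compat_r; lra).
    lra.
Qed.

Lemma minimal_series_agrees F : is_trop_series 0 1 F ->
  (forall i, (i < n)%nat -> non_smooth 0 1 F (p i)) ->
  (forall G, is_trop_series 0 1 G -> (forall i, (i < n)%nat -> non_smooth 0 1 G (p i)) ->
     forall z, 0 <= z <= 1 -> F z <= G z) ->
  forall z, 0 <= z <= 1 -> F z = F_inf z.
Proof.
  intros hF hns hmin z hz. apply Rle_antisym.
  - apply hmin; auto using F_inf_trop_series, F_inf_non_smooth.
  - apply F_inf_le; auto.
Qed.

Lemma has_mult_jump F h : (forall z, 0 <= z <= 1 -> F z = F_inf z) -> 0 < h < 1 ->
  has_mult F h (Z.of_nat (jump h)).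
Proof.
  intros agree hh. destruct (F_inf_germs F h agree hh) as [hl hr].
  exists (slope_left h), (slope_right h).
  split; [apply left_affine_deriv; auto|split; [apply right_affine_deriv; auto|]].
  rewrite <- INR_IZR_INZ. apply slope_left_minus_right.
Qed.

Section Agreement.

Variable F : R -> R.
Hypothesis agree : forall z, 0 <= z <= 1 -> F z = F_inf z.

Lemma non_smooth_iff_points h :
  non_smooth 0 1 F h <-> (0 < h < 1 /\ h = q) \/ exists i, (i < n)%nat /\ h = p i.
Proof.
  rewrite non_smooth_iff_jump by auto. unfold jump. split.
  - intros [hh hj]. destruct (classic (exists i, (i < n)%nat /\ h = p i)) as [e|none]; [auto|].
    rewrite count_eq_absent in hj by (intros i hi e; apply none; eauto).
    destruct (Req_EM_T q h); [left; auto|simpl in hj; lia].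
  - intros [[hh e]|[i [hi ->]]].
    + split; [auto|]. rewrite e. destruct (Req_EM_T q q); [lia|tauto].
    + split; [auto|]. rewrite count_eq_point by auto. lia.
Qed.

Lemma has_mult_at_point i : (i < n)%nat ->
  has_mult F (p i) (if Req_EM_T q (p i) then 2%Z else 1%Z).
Proof.
  intros hi. replace (if Req_EM_T q (p i) then 2%Z else 1%Z) with (Z.of_nat (jump (p i))).
  - apply has_mult_jump; auto.
  - unfold jump. rewrite count_eq_point by auto. destruct (Req_EM_T q (p i)); auto.
Qed.

Lemma has_mult_at_q : 0 < q -> (forall i, (i < n)%nat -> q <> p i) -> has_mult F q 1%Z.
Proof.
  intros hq0 hqp. replace 1%Z with (Z.of_nat (jump q)).
  - apply has_mult_jump; auto. lra.
  - unfold jump. rewrite count_eq_absent by (intros i hi e; apply (hqp i hi); auto).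
    destruct (Req_EM_T q q); [auto|tauto].
Qed.

End Agreement.

End MinimalSeries.

Theorem mainTheorem5 (n : nat) (p : nat -> R) (F : R -> R)
  (hp : forall i, (i < n)%nat -> 0 < p i < 1)
  (hdist : forall i j, (i < n)%nat -> (j < n)%nat -> p i = p j -> i = j)
  (hF : is_trop_series 0 1 F)
  (hFns : forall i, (i < n)%nat -> non_smooth 0 1 F (p i))
  (hFmin : forall G, is_trop_series 0 1 G ->
             (forall i, (i < n)%nat -> non_smooth 0 1 G (p i)) ->
             forall z, 0 <= z <= 1 -> F z <= G z) :
  let q := frac_part (- psum p n) in
  (q = 0 ->
     (forall h, non_smooth 0 1 F h <-> exists i, (i < n)%nat /\ h = p i) /\
     (forall i, (i < n)%nat -> has_mult F (p i) 1%Z)) /\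
  (forall j, (j < n)%nat -> q = p j ->
     (forall h, non_smooth 0 1 F h <-> exists i, (i < n)%nat /\ h = p i) /\
     has_mult F (p j) 2%Z /\
     (forall i, (i < n)%nat -> i <> j -> has_mult F (p i) 1%Z)) /\
  (q <> 0 -> (forall j, (j < n)%nat -> q <> p j) ->
     (forall h, non_smooth 0 1 F h <-> h = q \/ exists i, (i < n)%nat /\ h = p i) /\
     has_mult F q 1%Z /\
     (forall i, (i < n)%nat -> has_mult F (p i) 1%Z)).
Proof.
  intros q.
  set (m := (Int_part (- psum p n) + Z.of_nat n)%Z).
  assert (hm : IZR m + q = INR n - psum p n)
    by (unfold m, q, frac_part; rewrite plus_IZR, <- INR_IZR_INZ; ring).
  assert (hq : 0 <= q < 1) by (unfold q; pose proof (base_fp (- psum p n)); lra).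
  pose proof (minimal_series_agrees n p m q hp hdist hm hq F hF hFns hFmin) as agree.
  pose proof (non_smooth_iff_points n p m q hp hdist hq F agree) as NS.
  pose proof (has_mult_at_point n p m q hp hdist F agree) as MU.
  split; [|split].
  - intros q0. split.
    + intros h. rewrite NS. split; [intros [[hh e]|e]; [lra|auto] | auto].
    + intros i hi. specialize (MU i hi).
      destruct (Req_EM_T q (p i)); [pose proof (hp i hi); lra|auto].
  - intros j hj qj. split; [|split].
    + intros h. rewrite NS. split; [intros [[hh e]|e]; [exists j; split; congruence|auto] | auto].
    + specialize (MU j hj). destruct (Req_EM_T q (p j)); [auto|tauto].
    + intros i hi nij. specialize (MU i hi).
      destruct (Req_EM_T q (p i)); [destruct nij; apply hdist; congruence|auto].
  - intros q0 qp. split; [|split].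
    + intros h. rewrite NS. split; [intros [[hh e]|e]; auto | intros [->|e]; [left; lra|auto]].
    + apply (has_mult_at_q n p m q hq F agree); [lra|auto].
    + intros i hi. specialize (MU i hi).
      destruct (Req_EM_T q (p i)); [destruct (qp i hi); auto|auto].
Qed.
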